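(* Let $N\ge2$, $\zeta(t)=\max\{t,t^N\}$ for $t\ge0$, $\Phi_1(t)=\exp(|t|^{N/(N-1)})-\sum_{j=0}^{N-2}\frac{|t|^{Nj/(N-1)}}{j!}$, and let $\tilde\Phi_1(s)=\sup_{t\ge0}\{st-\Phi_1(t)\}$ ($s\ge0$) be its conjugate function. Then (i) $\tilde\Phi_1\big(\Phi_1(r)/r\big)\le\Phi_1(r)$ for all $r>0$; (ii) $\tilde\Phi_1(tr)\le\zeta(t)\tilde\Phi_1(r)$ for all $t,r\ge0$. Consequently $\tilde\Phi_1$ satisfies the $\Delta_2$-condition and $E_{\tilde\Phi_1}(\mathbb{R}^N)=L^{\tilde\Phi_1}(\mathbb{R}^N)$.
   Context: An $N$-function is a continuous, convex, even $\Theta:\mathbb{R}\to[0,\infty)$ with $\Theta(t)=0$ iff $t=0$, $\Theta(t)/t\to0$ as $t\to0$ and $\Theta(t)/t\to\infty$ as $t\to\infty$. $\Theta$ satisfies the $\Delta_2$-condition if $\Theta(2t)\le C\Theta(t)$ for all $t\ge0$ and some $C>0$. The Orlicz space $L^\Theta(\mathbb{R}^N)=\{u\in L^1_{loc}(\mathbb{R}^N):\int\Theta(|u|/\lambda)dx<\infty\text{ for some }\lambda>0\}$ carries the Luxemburg norm $\|u\|_\Theta=\inf\{\lambda>0:\int\Theta(|u|/\lambda)dx\le1\}$, and $E_\Theta(\mathbb{R}^N)$ is the closure in $L^\Theta(\mathbb{R}^N)$ of the functions with bounded support. *)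

From HB Require Import structures.
From mathcomp Require Import all_boot all_order all_algebra.
From mathcomp Require Import all_classical all_reals all_analysis.
Set Implicit Arguments. Unset Strict Implicit. Unset Printing Implicit Defensive.
Import Order.TTheory GRing.Theory Num.Theory.
Import numFieldNormedType.Exports.
Local Open Scope classical_set_scope.
Local Open Scope ring_scope.

Definition zeta {R : realType} (N : nat) (t : R) : R := Num.max t (t ^+ N).

Definition Phi1 {R : realType} (N : nat) (t : R) : R :=
  expR (`|t| `^ (N%:R / (N.-1)%:R)) -
  \sum_(0 <= j < N.-1) (`|t| `^ (N%:R * j%:R / (N.-1)%:R)) / (j`!)%:R.

(* Conjugate function: Phi1~(s) = sup_{t >= 0} (s t - Phi1(t)), s >= 0;
   extended evenly to s < 0 (N-functions are even). *)
Definition Phi1t {R : realType} (N : nat) (s : R) : R :=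
  sup [set `|s| * t - Phi1 N t | t in [set t : R | 0 <= t]].

Definition Delta2 {R : realType} (Theta : R -> R) : Prop :=
  exists C : R, 0 < C /\ forall t : R, 0 <= t -> Theta (2 * t) <= C * Theta t.

(* R^N with Lebesgue measure, as iterated product R x (R x (... x R))  *)
(* together with the sup-norm (for "bounded support" / local balls).   *)

Unset Implicit Arguments.
Record mspace (R : realType) := MSpace {
  ms_disp : measure_display;
  ms_car : measurableType ms_disp;
  ms_mu : set ms_car -> \bar R;
  ms_norm : ms_car -> R }.
Set Implicit Arguments.
Arguments ms_car {R} m.
Arguments ms_mu {R} m.
Arguments ms_norm {R} m.

(* RN R n is R^(n+1) *)
Fixpoint RN (R : realType) (n : nat) : mspace R :=
  match n with
  | 0 => @MSpace R _ (measurableTypeR R) (@lebesgue_measure R) (fun x => `|x|)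
  | n'.+1 =>
      let S := RN R n' in
      @MSpace R _ (measurableTypeR R * ms_car S)%type
        (product_measure1 (@lebesgue_measure R) (ms_mu S))
        (fun x => Num.max `|x.1| (ms_norm S x.2))
  end.

Definition Rn (R : realType) (N : nat) : mspace R := RN R N.-1.

Section Orlicz.
Context {R : realType} (X : mspace R) (Theta : R -> R).

Definition modular (u : ms_car X -> R) (l : R) : \bar R :=
  (\int[ms_mu X]_x (Theta (`|u x| / l))%:E)%E.

Definition LOrlicz : set (ms_car X -> R) :=
  [set u | measurable_fun setT u /\
     (forall r : R, (ms_mu X).-integrable [set x | ms_norm X x <= r] (EFin \o u)) /\
     exists l : R, 0 < l /\ (modular u l < +oo)%E].

Definition luxemburg (u : ms_car X -> R) : \bar R :=
  ereal_inf [set l%:E | l in [set l : R | 0 < l /\ (modular u l <= 1)%E]].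

Definition bounded_support (v : ms_car X -> R) : Prop :=
  exists r : R, forall x, r < ms_norm X x -> v x = 0.

Definition EOrlicz : set (ms_car X -> R) :=
  [set u | LOrlicz u /\ forall e : R, 0 < e ->
     exists v, LOrlicz v /\ bounded_support v /\
       (luxemburg (fun x => (u x - v x)%R) < e%:E)%E].

End Orlicz.

Arguments modular {R} X Theta u l.
Arguments LOrlicz {R} X Theta.
Arguments luxemburg {R} X Theta u.
Arguments bounded_support {R} X v.
Arguments EOrlicz {R} X Theta.

From HB Require Import structures.
From mathcomp Require Import all_boot all_order all_algebra.
From mathcomp Require Import all_classical all_reals all_analysis.
From mathcomp Require Import measurable_realfun lra ring.
Import Order.TTheory GRing.Theory Num.Theory.
Import numFieldNormedType.Exports.
Set Implicit Arguments. Unset Strict Implicit.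
Local Open Scope classical_set_scope.
Local Open Scope ring_scope.

(* Write [Phi1 t = E (|t|^p)] with [p = N/(N-1)] and [E z = expR z - sum_(j < N-1) z^j/j!]
   the tail of the exponential series. Each term of [E] is superlinear, so
   [lam^p Phi1 y <= Phi1 (lam y)] for [lam >= 1]. Hence [Phi1 r / r] is nondecreasing,
   which gives (i), and substituting [x = t^(N-1) y] in the supremum defining the
   conjugate gives [Phi1t (t r) <= t^N Phi1t r] for [t >= 1]; for [t <= 1] the factor
   [t] comes from [Phi1 >= 0]. The Delta_2 condition is the case [t = 2], and the same
   scaling bound supplies an integrable majorant for dominated convergence, so the
   truncations [u 1_{|x| <= n}] approximate every [u] of the Orlicz space. *)

Section expR_tail.
Variable R : realType.

Definition expR_tail (m : nat) (z : R) : R :=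
  expR z - \sum_(0 <= j < m) z ^+ j / (j`!)%:R.

Lemma nondecreasing_from (u : nat -> R) m :
  (forall n, (m <= n)%N -> u n <= u n.+1) -> forall n, (m <= n)%N -> u m <= u n.
Proof.
move=> u_nd n /subnKC <-; elim: (n - m)%N => [|k IHk]; first by rewrite addn0.
by rewrite addnS; apply: le_trans IHk (u_nd _ (leq_addr _ _)).
Qed.

Lemma expR_tail_ge_term m (z : R) : 0 <= z -> z ^+ m / (m`!)%:R <= expR_tail m z.
Proof.
move=> z0; rewrite /expR_tail lerBrDr addrC -[X in X <= _]seriesSr.
apply: limr_ge; first exact: is_cvg_series_exp_coeff.
near=> n; apply: (@nondecreasing_from (series (exp_coeff z)) m.+1); last first.
  by near: n; exists m.+1.
by move=> k _; rewrite seriesSr lerDl exp_coeff_ge0.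
Unshelve. all: by end_near.
Qed.

(* Termwise: [mu * z^k / k! <= (mu z)^k / k!] for every [k >= 1]. *)
Lemma expR_tail_superlinear m (z mu : R) : (1 <= m)%N -> 0 <= z -> 1 <= mu ->
  mu * expR_tail m z <= expR_tail m (mu * z).
Proof.
move=> m1 z0 mu1.
pose G n : R := series (exp_coeff (mu * z)) n - mu * series (exp_coeff z) n.
have cvgG : G @ \oo --> expR (mu * z) - mu * expR z.
  apply: cvgB; first exact: is_cvg_series_exp_coeff.
  by apply: cvgM; [exact: cvg_cst|exact: is_cvg_series_exp_coeff].
have limG : limn G = expR (mu * z) - mu * expR z by apply: cvg_lim.
suff : G m <= limn G by rewrite limG /G /series /expR_tail /=; lra.
apply: limr_ge; first exact: cvgP cvgG.
near=> n; apply: (@nondecreasing_from G m); last first.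
  by near: n; exists m.
move=> k mk; rewrite /G !seriesSr /exp_coeff /=.
suff : mu * (z ^+ k / (k`!)%:R) <= (mu * z) ^+ k / (k`!)%:R by lra.
rewrite exprMn mulrA ler_wpM2r ?divr_ge0 ?exprn_ge0 // ler_wpM2r ?exprn_ge0 //.
by rewrite ler_eXnr // (leq_trans m1 mk).
Unshelve. all: by end_near.
Qed.

End expR_tail.

Section Phi1.
Variables (R : realType) (N : nat).
Hypothesis N_ge2 : (2 <= N)%N.

Let p : R := N%:R / (N.-1)%:R.

Let Nm1_ge1 : (1 <= N.-1)%N.
Proof. by case: N N_ge2 => // -[]. Qed.

Let Nm1_gt0 : 0 < (N.-1)%:R :> R.
Proof. by rewrite ltr0n Nm1_ge1. Qed.

Let p_ge1 : 1 <= p.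
Proof. by rewrite /p ler_pdivlMr // mul1r ler_nat leq_pred. Qed.

Lemma Phi1E (t : R) : Phi1 N t = expR_tail N.-1 (`|t| `^ p).
Proof.
rewrite /Phi1 /expR_tail; congr (_ - _); apply: eq_bigr => j _; congr (_ / _).
by rewrite mulrAC powRrM powR_mulrn // powR_ge0.
Qed.

Let powR_p_Nm1 (x : R) : 0 <= x -> (x `^ p) ^+ N.-1 = x ^+ N.
Proof.
move=> x0; rewrite -powR_mulrn ?powR_ge0 // -powRrM /p divfK ?gt_eqF //.
by rewrite powR_mulrn.
Qed.

Let expr_Nm1_powR_p (x : R) : 0 <= x -> (x ^+ N.-1) `^ p = x ^+ N.
Proof.
by move=> x0; rewrite -powR_mulrn // -powRrM mulrC powRrM powR_mulrn ?powR_ge0 // powR_p_Nm1.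
Qed.

Lemma Phi1_ge_pow (t : R) : `|t| ^+ N / ((N.-1)`!)%:R <= Phi1 N t.
Proof.
rewrite Phi1E -powR_p_Nm1 //; exact: expR_tail_ge_term (powR_ge0 _ _).
Qed.

Lemma Phi1_ge0 (t : R) : 0 <= Phi1 N t.
Proof. by apply: le_trans (Phi1_ge_pow t); rewrite divr_ge0 ?exprn_ge0. Qed.

Lemma Phi1_0 : Phi1 N (0 : R) = 0.
Proof.
apply/eqP; rewrite eq_le Phi1_ge0 andbT Phi1E normr0 powR0 ?gt_eqF //.
  rewrite /expR_tail expR0 big_ltn // expr0 fact0 divr1 opprD addrA subrr sub0r oppr_le0.
  by apply: sumr_ge0 => j _; rewrite divr_ge0 ?exprn_ge0.
exact: lt_le_trans ltr01 p_ge1.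
Qed.

Lemma Phi1_superhomogeneous (lam y : R) : 1 <= lam -> 0 <= y ->
  lam `^ p * Phi1 N y <= Phi1 N (lam * y).
Proof.
move=> lam1 y0; have lam0 : 0 <= lam by exact: le_trans ler01 lam1.
rewrite !Phi1E normrM (ger0_norm lam0) (ger0_norm y0) powRM //.
apply: expR_tail_superlinear => //; first exact: powR_ge0.
by rewrite -(powRr0 lam) ler_powR // (le_trans ler01 p_ge1).
Qed.

Lemma Phi1_pow_scale (t y : R) : 1 <= t -> 0 <= y ->
  t ^+ N * Phi1 N y <= Phi1 N (t ^+ N.-1 * y).
Proof.
move=> t1 y0; have := Phi1_superhomogeneous (exprn_ege1 N.-1 t1) y0.
by rewrite expr_Nm1_powR_p // (le_trans ler01 t1).
Qed.

Lemma Phi1_ratio_le (r t : R) : 0 < r -> r <= t -> t * Phi1 N r <= r * Phi1 N t.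
Proof.
move=> r0 rt; have t0 : 0 < t by exact: lt_le_trans r0 rt.
have tr1 : 1 <= t / r by rewrite ler_pdivlMr // mul1r.
have := Phi1_superhomogeneous tr1 (ltW r0); rewrite mulrVK ?unitfE ?gt_eqF //.
have le_tr_pow : t / r <= (t / r) `^ p by rewrite le1r_powR.
move=> /(le_trans (ler_wpM2r (Phi1_ge0 r) le_tr_pow)).
by rewrite mulrAC ler_pdivrMr // [_ * r]mulrC.
Qed.

End Phi1.

Section conjugate.
Variables (R : realType) (N : nat).
Hypothesis N_ge2 : (2 <= N)%N.

(* [Phi1 t >= t^N / (N-1)!] beats the linear [|s| t] beyond [1 + |s| (N-1)!]. *)
Lemma Phi1t_set_ubound (s : R) :
  ubound [set `|s| * t - Phi1 N t | t in [set t : R | 0 <= t]]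
    (`|s| * (1 + `|s| * ((N.-1)`!)%:R)).
Proof.
set c := ((N.-1)`!)%:R; set T := 1 + `|s| * c; move=> _ [t /= t0 <-].
have c_gt0 : 0 < c by rewrite ltr0n fact_gt0.
have T0 : 0 <= `|s| * T by rewrite mulr_ge0 // addr_ge0 // mulr_ge0 // ltW.
have [tT|Tt] := leP t T.
  have := Phi1_ge0 N_ge2 t; have : `|s| * t <= `|s| * T by rewrite ler_wpM2l.
  lra.
suff : `|s| * t <= Phi1 N t by lra.
have t1 : 1 <= t by apply: le_trans (ltW Tt); rewrite lerDl mulr_ge0 // ltW.
have sc_t : `|s| * c <= t by apply: le_trans (ltW Tt); rewrite lerDr.
apply: le_trans (Phi1_ge_pow N_ge2 t); rewrite (ger0_norm t0) ler_pdivlMr //.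
have : `|s| * t * c <= t ^+ 2 by rewrite mulrAC mulrC expr2 ler_wpM2l.
by move/le_trans; apply; rewrite ler_weXn2l.
Qed.

Lemma Phi1t_has_ubound (s : R) :
  has_ubound [set `|s| * t - Phi1 N t | t in [set t : R | 0 <= t]].
Proof. by eexists; exact: Phi1t_set_ubound. Qed.

Lemma Phi1t_ge (s t : R) : 0 <= t -> `|s| * t - Phi1 N t <= Phi1t N s.
Proof. by move=> t0; apply: (ub_le_sup (Phi1t_has_ubound s)); exists t. Qed.

Lemma Phi1t_le (s y : R) : (forall t, 0 <= t -> `|s| * t - Phi1 N t <= y) ->
  Phi1t N s <= y.
Proof.
move=> le_y; apply: ge_sup; first by exists (`|s| * 0 - Phi1 N 0), 0 => /=.
by move=> _ [t t0 <-]; exact: le_y.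
Qed.

Lemma Phi1t_ge0 (s : R) : 0 <= Phi1t N s.
Proof. by have := Phi1t_ge s (lexx 0); rewrite mulr0 Phi1_0 // subrr. Qed.

Lemma Phi1t_0 : Phi1t N (0 : R) = 0.
Proof.
apply/eqP; rewrite eq_le Phi1t_ge0 andbT; apply: Phi1t_le => t _.
by rewrite normr0 mul0r sub0r oppr_le0 Phi1_ge0.
Qed.

Lemma Phi1t_le_norm (a b : R) : `|a| <= `|b| -> Phi1t N a <= Phi1t N b.
Proof.
move=> ab; apply: Phi1t_le => t t0; apply: le_trans (Phi1t_ge b t0).
by rewrite lerB // ler_wpM2r.
Qed.

(* For [t <= r] the supremand is at most [Phi1 r]; beyond [r] it is [<= 0] since
   [Phi1 t / t >= Phi1 r / r]. *)
Lemma Phi1t_Phi1_ratio (r : R) : 0 < r -> Phi1t N (Phi1 N r / r) <= Phi1 N r.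
Proof.
move=> r0; have P0 : 0 <= Phi1 N r / r by rewrite divr_ge0 ?Phi1_ge0 ?ltW.
apply: Phi1t_le => t t0; rewrite ger0_norm //.
have [tr|rt] := leP t r.
  have : Phi1 N r / r * t <= Phi1 N r.
    by rewrite -{2}(divfK (lt0r_neq0 r0) (Phi1 N r)) ler_wpM2l.
  have := Phi1_ge0 N_ge2 t; lra.
have : Phi1 N r / r * t <= Phi1 N t.
  by rewrite mulrAC ler_pdivrMr // mulrC [_ * r]mulrC (Phi1_ratio_le N_ge2 r0 (ltW rt)).
have := Phi1_ge0 N_ge2 r; lra.
Qed.

Lemma Phi1t_scale_le1 (t r : R) : 0 <= t <= 1 -> 0 <= r ->
  Phi1t N (t * r) <= t * Phi1t N r.
Proof.
move=> /andP[t0 t1] r0; apply: Phi1t_le => x x0.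
have := Phi1t_ge r x0; rewrite normrM (ger0_norm t0) (ger0_norm r0) => le_rx.
have : t * Phi1 N x <= Phi1 N x by rewrite ler_piMl ?Phi1_ge0.
have : t * (r * x - Phi1 N x) <= t * Phi1t N r by rewrite ler_wpM2l.
lra.
Qed.

(* Substitute [x = t^(N-1) y] in the supremum and use [Phi1_pow_scale]. *)
Lemma Phi1t_scale_ge1 (t r : R) : 1 <= t -> 0 <= r ->
  Phi1t N (t * r) <= t ^+ N * Phi1t N r.
Proof.
move=> t1 r0; have t0 : 0 < t by exact: lt_le_trans ltr01 t1.
have tNm1_gt0 : 0 < t ^+ N.-1 by rewrite exprn_gt0.
have tN : t ^+ N = t * t ^+ N.-1 by rewrite -exprS prednK // (ltn_trans _ N_ge2).
apply: Phi1t_le => x x0; pose y := x / t ^+ N.-1.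
have y0 : 0 <= y by rewrite divr_ge0 // ltW.
have -> : x = t ^+ N.-1 * y by rewrite /y mulrC divfK // lt0r_neq0.
rewrite normrM (ger0_norm (ltW t0)) (ger0_norm r0).
have := Phi1_pow_scale N_ge2 t1 y0.
have : t ^+ N * (r * y - Phi1 N y) <= t ^+ N * Phi1t N r.
  rewrite ler_wpM2l ?exprn_ge0 ?(ltW t0) //.
  by have := Phi1t_ge r y0; rewrite (ger0_norm r0).
have -> : t * r * (t ^+ N.-1 * y) = t ^+ N * (r * y) by rewrite tN; ring.
lra.
Qed.

Lemma Phi1t_scale (t r : R) : 0 <= t -> 0 <= r ->
  Phi1t N (t * r) <= zeta N t * Phi1t N r.
Proof.
move=> t0 r0; rewrite /zeta; have [t1|t1] := leP t 1.
  have tN_le : t ^+ N <= t by rewrite -[leRHS]expr1 ler_wiXn2l // ltnW.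
  by rewrite max_l // Phi1t_scale_le1 ?t0.
have tN_ge : t <= t ^+ N by rewrite -[leLHS]expr1 ler_weXn2l // ?ltW // ltnW.
by rewrite max_r // Phi1t_scale_ge1 // ltW.
Qed.

Lemma Phi1t_Delta2 : Delta2 (@Phi1t R N).
Proof.
exists (2 ^+ N); split; first by rewrite exprn_gt0.
move=> t t0; apply: le_trans (Phi1t_scale (ler0n _ 2) t0) _.
by rewrite /zeta max_r // -[leLHS]expr1 ler_weXn2l ?ler1n // ltnW.
Qed.

End conjugate.

Section product_measure_sigma_finite.
Local Open Scope ereal_scope.
Context d1 d2 (T1 : measurableType d1) (T2 : measurableType d2) (R : realType).
Variables (m1 : {sigma_finite_measure set T1 -> \bar R})
  (m2 : {sigma_finite_measure set T2 -> \bar R}).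

(* The library establishes this only locally (in lebesgue_integral_fubini), so the
   sigma-finite structure on [m1 \x m2] is not available outside it. *)
Lemma product_measure1_sigma_finite : sigma_finite setT (m1 \x m2).
Proof.
have /sigma_finiteP[F [UF ndF finF]] := sigma_finiteT m1.
have /sigma_finiteP[G [UG ndG finG]] := sigma_finiteT m2.
exists (fun n => F n `*` G n); last first.
  move=> n; have [mFn Fn_fin] := finF n; have [mGn Gn_fin] := finG n.
  split; first exact: measurableX.
  by rewrite product_measure1E // lte_mul_pinfty // ge0_fin_numE.
apply/seteqP; split => [[x y] _|]; last by [].
have : (x, y) \in setT `*` setT by rewrite in_setE.
rewrite {1}UF {1}UG in_setE => -[[i _ /= Fix] [j _ /= Gjy]].
exists (maxn i j) => //; split.
- by move: x Fix; exact/subsetPset/ndF/leq_maxl.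
- by move: y Gjy; exact/subsetPset/ndG/leq_maxr.
Qed.

Definition product_sigma_finite_measure :
    {sigma_finite_measure set (T1 * T2)%type -> \bar R} :=
  HB.pack_for (SigmaFiniteMeasure.type (T1 * T2)%type R) (m1 \x m2)
    (Measure_isSigmaFinite.Build _ _ _ (m1 \x m2) product_measure1_sigma_finite).

End product_measure_sigma_finite.

Lemma RN_sigma_finite_measure (R : realType) n :
  {m : {sigma_finite_measure set ms_car (RN R n) -> \bar R} | ms_mu (RN R n) = m}.
Proof.
pose leb := SigmaFiniteMeasure.clone _ _ _ (@lebesgue_measure R) _.
elim: n => [|n [m mE]]; first by exists leb.
by exists (product_sigma_finite_measure leb m); rewrite /= mE.
Qed.

Lemma RN_norm_measurable (R : realType) n : measurable_fun setT (ms_norm (RN R n)).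
Proof.
elim: n => [|n IHn] /=; first exact: normr_measurable.
by apply: measurable_maxr; apply: measurableT_comp.
Qed.

Section EOrlicz_eq_LOrlicz.
Variables (R : realType) (X : mspace R) (Theta : R -> R).
Variable m : {measure set ms_car X -> \bar R}.
Hypothesis muE : ms_mu X = m.
Hypothesis measurable_norm : measurable_fun setT (ms_norm X).
Hypothesis Theta0 : Theta 0 = 0.
Hypothesis Theta_ge0 : forall s, 0 <= Theta s.
Hypothesis Theta_nondecreasing : forall a b, 0 <= a -> a <= b -> Theta a <= Theta b.
Variable K : R -> R.
Hypothesis K_ge0 : forall c, 0 <= c -> 0 <= K c.
Hypothesis Theta_scale : forall c s, 0 <= c -> 0 <= s -> Theta (c * s) <= K c * Theta s.

Let ball (r : R) := [set x | ms_norm X x <= r].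

Let measurable_ball r : measurable (ball r).
Proof.
rewrite (_ : ball r = setT `&` ms_norm X @^-1` `]-oo, r]); first exact: measurable_norm.
by apply/seteqP; split => x /=; rewrite in_itv /=; [move=> ->|case].
Qed.

Lemma measurable_modular_integrand (w : ms_car X -> R) (l : R) : 0 < l ->
  measurable_fun setT w -> measurable_fun setT (fun x => (Theta (`|w x| / l))%:E).
Proof.
move=> l0 mw; apply/measurable_EFinP.
pose g s := Theta (Num.max s 0).
have g_nd : {homo g : s t / s <= t}.
  move=> s t st; apply: Theta_nondecreasing; first by rewrite le_max lexx orbT.
  by rewrite ge_max !le_max st lexx !orbT.
rewrite (_ : (fun x => _) = g \o (fun x => `|w x| / l)); last first.
  by apply/funext => x /=; rewrite /g max_l // divr_ge0 // ltW.
apply: measurableT_comp; first exact: nondecreasing_measurable.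
by apply: measurable_funM => //; apply: measurableT_comp => //; exact: normr_measurable.
Qed.

Let truncate (u : ms_car X -> R) (n : nat) x := u x * \1_(ball n%:R) x.

Let truncateE u n x : truncate u n x = if ms_norm X x <= n%:R then u x else 0.
Proof.
rewrite /truncate indicE; case: ifPn => [xn|/negP xn].
  by rewrite mem_set // mulr1.
by rewrite memNset // mulr0.
Qed.

Lemma LOrlicz_truncate u n : LOrlicz X Theta u -> LOrlicz X Theta (truncate u n).
Proof.
rewrite /LOrlicz /modular muE => -[u_meas [u_loc [l [l0 u_fin]]]].
have mv : measurable_fun setT (truncate u n).
  by apply: measurable_funM => //; apply: measurable_indic.
have le_v x : `|truncate u n x| <= `|u x|.
  by rewrite truncateE; case: ifP; rewrite ?normr0.
split=> //; split=> [r|].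
  apply: (le_integrable (measurable_ball r)) (u_loc r).
    by apply: measurable_funTS; apply/measurable_EFinP.
  by move=> x _ /=; rewrite lee_fin.
exists l; split=> //; apply: le_lt_trans u_fin.
apply: ge0_le_integral => //; try exact: measurable_modular_integrand.
  by move=> x _; rewrite lee_fin.
move=> x _; rewrite lee_fin; apply: Theta_nondecreasing.
  by rewrite divr_ge0 // ltW.
by rewrite ler_pM2r ?invr_gt0.
Qed.

(* Dominated convergence, with the integrable majorant [Theta (|u| / a)] obtained from
   [Theta (|u| / l)] by the scaling hypothesis. *)
Lemma modular_sub_truncate_lt1 u a : LOrlicz X Theta u -> 0 < a ->
  exists n, (modular X Theta (fun x => (u x - truncate u n x)%R) a < 1)%E.
Proof.
rewrite /modular muE => -[u_meas [_ [l [l0 u_fin]]]] a0.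
rewrite /modular muE in u_fin.
have le_uv n x : `|u x - truncate u n x| <= `|u x|.
  by rewrite truncateE; case: ifP; rewrite ?subrr ?normr0 ?subr0.
pose g x := (Theta (`|u x| / a))%:E.
have int_g : m.-integrable setT g.
  apply/integrableP; split; first exact: measurable_modular_integrand.
  have la0 : 0 <= l / a by rewrite divr_ge0 // ltW.
  apply: le_lt_trans (_ : \int[m]_x ((K (l / a))%:E * (Theta (`|u x| / l))%:E) < +oo)%E.
    apply: ge0_le_integral => //.
    - by apply: measurableT_comp => //; exact: measurable_modular_integrand.
    - by apply: measurable_funeM; exact: measurable_modular_integrand.
    move=> x _; rewrite gee0_abs ?lee_fin //.
    have -> : `|u x| / a = l / a * (`|u x| / l) by field; rewrite !gt_eqF.
    by apply: Theta_scale => //; rewrite divr_ge0 // ltW.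
  rewrite ge0_integralZl_EFin ?K_ge0 //; first by rewrite lte_mul_pinfty // lee_fin K_ge0.
  - by move=> x _; rewrite lee_fin.
  - exact: measurable_modular_integrand.
pose f n x := (Theta (`|u x - truncate u n x| / a))%:E.
have mf n : measurable_fun setT (f n).
  apply: measurable_modular_integrand => //; apply: measurable_funB => //.
  by apply: measurable_funM => //; apply: measurable_indic.
have f_cvg0 : {ae m, forall x, setT x -> f ^~ x @ \oo --> 0%E}.
  apply: aeW => x _; apply: cvg_near_cst.
  apply: filterS (nbhs_infty_ger (ms_norm X x)) => n xn.
  by rewrite /f truncateE xn subrr normr0 mul0r Theta0.
have f_le_g : {ae m, forall x n, setT x -> (`|f n x| <= g x)%E}.
  apply: aeW => x n _; rewrite gee0_abs ?lee_fin //; apply: Theta_nondecreasing.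
    by rewrite divr_ge0 // ltW.
  by rewrite ler_pM2r ?invr_gt0.
have [_ _] := dominated_convergence measurableT mf (measurable_cst _) f_cvg0 int_g f_le_g.
rewrite integral0 => /(_ _ (open_ereal_lt' (@lte01 R))) [n _ /(_ n (leqnn n))] /=.
by exists n.
Qed.

Lemma EOrlicz_eq_LOrlicz : EOrlicz X Theta = LOrlicz X Theta.
Proof.
apply/seteqP; split=> [u [] //|u Lu]; split=> // e e0.
have e20 : 0 < e / 2 by rewrite divr_gt0.
have [n modular_lt1] := modular_sub_truncate_lt1 Lu e20.
exists (truncate u n); split; first exact: LOrlicz_truncate.
split; first by exists n%:R => x xn; rewrite truncateE leNgt xn.
apply: (@le_lt_trans _ _ (e / 2)%:E); last by rewrite lte_fin ltr_pdivrMr // ltr_pMr // ltr1n.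
by apply: ereal_inf_lbound; exists (e / 2) => //; split=> //; exact: ltW.
Qed.

End EOrlicz_eq_LOrlicz.

Theorem lemma2p5 (R : realType) (N : nat) (hN : (2 <= N)%N) :
  (forall r : R, 0 < r -> Phi1t N (Phi1 N r / r) <= Phi1 N r) /\
  (forall t r : R, 0 <= t -> 0 <= r -> Phi1t N (t * r) <= zeta N t * Phi1t N r) /\
  Delta2 (@Phi1t R N) /\
  EOrlicz (Rn R N) (@Phi1t R N) = LOrlicz (Rn R N) (@Phi1t R N).
Proof.
split; first exact: Phi1t_Phi1_ratio.
split; first exact: Phi1t_scale.
split; first exact: Phi1t_Delta2.
have [m muE] := RN_sigma_finite_measure R N.-1.
have Phi1t_nondecreasing (a b : R) : 0 <= a -> a <= b -> Phi1t N a <= Phi1t N b.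
  by move=> a0 ab; apply: (Phi1t_le_norm hN); rewrite !ger0_norm // (le_trans a0 ab).
have zeta_ge0 (c : R) : 0 <= c -> 0 <= zeta N c by move=> c0; rewrite le_max c0.
apply: (@EOrlicz_eq_LOrlicz R (Rn R N) (@Phi1t R N) m muE _ _ _ _ (zeta N)) => //.
- exact: RN_norm_measurable.
- exact: Phi1t_0.
- exact: Phi1t_ge0.
- exact: Phi1t_scale.
Qed.
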